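(* Let $n\in\mathbb{N}$ and let $\Delta:M_n\to M_n$ be a (not necessarily linear) weak-2-local derivation on $M_n=M_n(\mathbb{C})$ which is symmetric, i.e. $\Delta(a^* )^*=\Delta(a)$ for all $a\in M_n$. Then $\Delta$ is linear and a derivation.
   Context: A derivation on a C$^*$-algebra $A$ is a linear map $D:A\to A$ with $D(ab)=D(a)b+aD(b)$. A (not necessarily linear) map $\Delta:A\to A$ is a weak-2-local derivation if for every $a,b\in A$ and every $\phi\in A^*$ there exists a derivation $D_{a,b,\phi}:A\to A$ such that $\phi\Delta(a)=\phi D_{a,b,\phi}(a)$ and $\phi\Delta(b)=\phi D_{a,b,\phi}(b)$. *)

From HB Require Import structures.
From mathcomp Require Import all_boot all_order all_algebra.
From mathcomp Require Import complex.
From mathcomp Require Import reals.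
Set Implicit Arguments. Unset Strict Implicit. Unset Printing Implicit Defensive.
Import Order.TTheory GRing.Theory Num.Theory.
Local Open Scope ring_scope.

Definition mx_linear (R : realType) (n : nat) (f : 'M[R[i]]_n -> 'M[R[i]]_n) :=
  forall (c : R[i]) (x y : 'M[R[i]]_n), f (c *: x + y) = c *: f x + f y.

(* C-linear functionals on M_n(C) (the dual space; all are continuous
   since M_n(C) is finite dimensional). *)
Definition mx_functional (R : realType) (n : nat) (phi : 'M[R[i]]_n -> R[i]) :=
  forall (c : R[i]) (x y : 'M[R[i]]_n), phi (c *: x + y) = c * phi x + phi y.

Definition is_derivation (R : realType) (n : nat) (D : 'M[R[i]]_n -> 'M[R[i]]_n) :=
  mx_linear D /\ forall a b : 'M[R[i]]_n, D (a *m b) = D a *m b + a *m D b.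

Definition weak_2_local_derivation (R : realType) (n : nat)
    (Delta : 'M[R[i]]_n -> 'M[R[i]]_n) :=
  forall (a b : 'M[R[i]]_n) (phi : 'M[R[i]]_n -> R[i]), mx_functional phi ->
    exists D : 'M[R[i]]_n -> 'M[R[i]]_n, is_derivation D /\
      phi (Delta a) = phi (D a) /\ phi (Delta b) = phi (D b).

Definition adjmx (R : realType) (n : nat) (a : 'M[R[i]]_n) : 'M[R[i]]_n :=
  (map_mx (@conjc R) a)^T.

Definition symmetric_map (R : realType) (n : nat) (Delta : 'M[R[i]]_n -> 'M[R[i]]_n) :=
  forall a : 'M[R[i]]_n, adjmx (Delta (adjmx a)) = Delta a.

From HB Require Import structures.
From mathcomp Require Import all_boot all_order all_algebra.
From mathcomp Require Import complex.
From mathcomp Require Import reals.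
Set Implicit Arguments. Unset Strict Implicit. Unset Printing Implicit Defensive.
Import Order.TTheory GRing.Theory Num.Theory.
Local Open Scope ring_scope.

(* The pairing B(x, w) = tr(Delta(x) w) determines Delta.  Every derivation of
   M_n is inner, D = [S, -], so tr(D(x) w) = tr(S [x, w]); applying the
   weak-2-local property to the functional tr(- w) shows that B(x, w)
   vanishes when x and w commute and that B(x, w) = B(y, w) when x - y
   commutes with w.  Taking w = x - y gives antisymmetry of B, and
   antisymmetry makes B, hence Delta, linear in its first argument.  Finally
   the values of B on pairs of matrix units are computed from commuting
   configurations of matrix units; they are exactly those of the inner
   derivation [Z, -] for an explicit matrix Z. *)

Section TracePairing.
Variables (F : comPzRingType) (n : nat).
Implicit Types A B S x w : 'M[F]_n.

Lemma mxtrace_mul_delta A (i j : 'I_n) : \tr (A *m delta_mx j i) = A i j.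
Proof.
rewrite /mxtrace (bigD1 i) //= big1 ?addr0 => [|k /negbTE nki].
  rewrite !mxE (bigD1 j) //= big1 ?addr0 => [|k /negbTE nkj].
    by rewrite mxE !eqxx mulr1.
  by rewrite mxE nkj mulr0.
by rewrite mxE big1 // => l _; rewrite mxE nki andbF mulr0.
Qed.

Lemma eq_mx_by_trace A B : (forall w, \tr (A *m w) = \tr (B *m w)) -> A = B.
Proof. by move=> eqAB; apply/matrixP => i j; rewrite -!(mxtrace_mul_delta _ i j). Qed.

Lemma mxtrace_commutator S x w :
  \tr ((S *m x - x *m S) *m w) = \tr (S *m (x *m w - w *m x)).
Proof.
rewrite mulmxBl mulmxBr !raddfB /= -!mulmxA; congr (_ - _).
by rewrite mxtrace_mulC mulmxA.
Qed.

Lemma mxtrace_mul_delta_delta A (a b p q : 'I_n) :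
  \tr (A *m delta_mx a b *m delta_mx q p) = A p a *+ (b == q).
Proof.
rewrite -mulmxA mul_delta_mx_cond; case: (b == q).
  by rewrite mulr1n mxtrace_mul_delta.
by rewrite mulmx0 mxtrace0.
Qed.

Lemma mxtrace_delta_mul_delta A (a b p q : 'I_n) :
  \tr (delta_mx a b *m A *m delta_mx q p) = A b q *+ (p == a).
Proof.
rewrite mxtrace_mulC mulmxA mul_delta_mx_cond; case: (p == a).
  by rewrite mulr1n mxtrace_mulC mxtrace_mul_delta.
by rewrite mul0mx mxtrace0.
Qed.

End TracePairing.

Section LinearMaps.
Variables (R : realType) (n : nat).
Local Notation M := 'M[R[i]]_n.
Implicit Types (f g : M -> M) (x y z : M).

Lemma mx_linear0 f : mx_linear f -> f 0 = 0.
Proof.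
move=> lin_f; have := lin_f 1 0 0; rewrite scale1r !addr0 scale1r => f0.
by apply: (addrI (f 0)); rewrite addr0 -f0.
Qed.

Lemma mx_linearD f : mx_linear f -> {morph f : x y / x + y}.
Proof. by move=> lin_f x y; rewrite -[x]scale1r lin_f !scale1r. Qed.

Lemma mx_linearZ f c x : mx_linear f -> f (c *: x) = c *: f x.
Proof. by move=> lin_f; rewrite -[c *: x]addr0 lin_f mx_linear0 ?addr0. Qed.

Lemma mx_linear_sum_delta f x : mx_linear f ->
  f x = \sum_i \sum_j x i j *: f (delta_mx i j).
Proof.
move=> lin_f; rewrite {1}(matrix_sum_delta x).
rewrite (big_morph f (mx_linearD lin_f) (mx_linear0 lin_f)); apply: eq_bigr => i _.
rewrite (big_morph f (mx_linearD lin_f) (mx_linear0 lin_f)); apply: eq_bigr => j _.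
exact: mx_linearZ.
Qed.

Lemma mx_linear_eq_on_delta f g : mx_linear f -> mx_linear g ->
  (forall a b, f (delta_mx a b) = g (delta_mx a b)) -> f =1 g.
Proof.
move=> lin_f lin_g eq_fg x; rewrite (mx_linear_sum_delta x lin_f) (mx_linear_sum_delta x lin_g).
by apply: eq_bigr => a _; apply: eq_bigr => b _; rewrite eq_fg.
Qed.

Lemma mx_linear_ad z : mx_linear (fun x => z *m x - x *m z).
Proof.
move=> c x y; rewrite mulmxDr mulmxDl -scalemxAr -scalemxAl scalerBr.
by rewrite addrACA opprD.
Qed.

Lemma mx_functional_trace w : mx_functional (fun x : M => \tr (x *m w)).
Proof. by move=> c x y; rewrite mulmxDl -scalemxAl mxtraceD mxtraceZ. Qed.

End LinearMaps.

Section InnerDerivations.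
Variables (R : realType) (n : nat) (o : 'I_n).
Local Notation M := 'M[R[i]]_n.
Local Notation E a b := (delta_mx a b : M).
Variables (D : M -> M) (derD : is_derivation D).

Definition derivation_mx : M := \sum_k D (E k o) *m E o k.

Lemma derivation_mx_mul_delta a b :
  derivation_mx *m E a b = D (E a o) *m E o b.
Proof.
rewrite mulmx_suml (bigD1 a) //= big1 ?addr0 => [|k nka].
  by rewrite -mulmxA mul_delta_mx.
by rewrite -mulmxA mul_delta_mx_0 ?mulmx0.
Qed.

Lemma delta_mul_derivation_mx a b :
  E a b *m derivation_mx = D (E a o) *m E o b - D (E a b).
Proof.
have [lin_D leibniz_D] := derD.
have leibniz_delta k : E a b *m D (E k o) =
    D (E a b *m E k o) - D (E a b) *m E k o.
  by rewrite leibniz_D addrAC subrr add0r.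
rewrite mulmx_sumr; under eq_bigr do rewrite mulmxA leibniz_delta mulmxBl.
rewrite sumrB; under [X in _ - X]eq_bigr do rewrite -mulmxA mul_delta_mx.
rewrite -mulmx_sumr -mx1_sum_delta mulmx1 (bigD1 b) //= big1 ?addr0 => [|k nkb].
  by rewrite mul_delta_mx.
by rewrite mul_delta_mx_0 1?eq_sym // mx_linear0 // mul0mx.
Qed.

Lemma derivation_inner x : D x = derivation_mx *m x - x *m derivation_mx.
Proof.
have [lin_D _] := derD.
apply: (mx_linear_eq_on_delta lin_D (mx_linear_ad _)) => a b.
by rewrite derivation_mx_mul_delta delta_mul_derivation_mx opprB addrC addrNK.
Qed.

End InnerDerivations.

Section WeakTwoLocal.
Variables (R : realType) (n : nat).
Local Notation M := 'M[R[i]]_n.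
Local Notation E a b := (delta_mx a b : M).
Variables (o : 'I_n) (Delta : M -> M) (w2l : weak_2_local_derivation Delta).
Local Notation B x w := (\tr (Delta x *m w)).

Lemma w2l_trace_commutator x y w : exists S : M,
  B x w = \tr (S *m (x *m w - w *m x)) /\ B y w = \tr (S *m (y *m w - w *m y)).
Proof.
have [D [derD [eq_x eq_y]]] := w2l x y (mx_functional_trace w).
exists (derivation_mx o D).
by rewrite eq_x eq_y !(derivation_inner o derD) !mxtrace_commutator.
Qed.

Lemma w2l_trace_commuting x w : x *m w = w *m x -> B x w = 0.
Proof.
move=> com_xw; have [S [-> _]] := w2l_trace_commutator x x w.
by rewrite com_xw subrr mulmx0 mxtrace0.
Qed.

Lemma w2l_trace_congr x y w : (x - y) *m w = w *m (x - y) -> B x w = B y w.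
Proof.
move=> com; have [S [-> ->]] := w2l_trace_commutator x y w.
apply/eqP; rewrite -subr_eq0 -raddfB /= -mulmxBr.
have -> : x *m w - w *m x - (y *m w - w *m y) = (x - y) *m w - w *m (x - y).
  by rewrite mulmxBl mulmxBr !opprB addrACA [RHS]addrACA [- (w *m x) + _]addrC.
by rewrite com subrr mulmx0 mxtrace0.
Qed.

Lemma w2l_trace_antisym x y : B x y = - B y x.
Proof.
have := @w2l_trace_congr x y (x - y) (erefl _).
rewrite !mulmxBr !raddfB /= (w2l_trace_commuting (erefl (x *m x))).
rewrite (w2l_trace_commuting (erefl (y *m y))) sub0r subr0 => <-.
by rewrite opprK.
Qed.

Lemma w2l_linear : mx_linear Delta.
Proof.
move=> c x y; apply: eq_mx_by_trace => w.
rewrite w2l_trace_antisym mulmxDr -scalemxAr mxtraceD mxtraceZ.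
by rewrite mulmxDl -scalemxAl mxtraceD mxtraceZ !(w2l_trace_antisym _ w) mulrN opprD.
Qed.

Lemma w2l_traceDl x y w : B (x + y) w = B x w + B y w.
Proof. by rewrite mx_linearD ?mulmxDl ?mxtraceD //; exact: w2l_linear. Qed.

Lemma w2l_traceDr x y w : B x (y + w) = B x y + B x w.
Proof. by rewrite mulmxDr mxtraceD. Qed.

Lemma w2l_trace_delta0 a b c d : b != c -> d != a -> B (E a b) (E c d) = 0.
Proof. by move=> nbc nda; apply: w2l_trace_commuting; rewrite !mul_delta_mx_0. Qed.

Lemma w2l_trace_delta_chain a b d : d != a ->
  B (E a b) (E b d) = B (E a a) (E a d).
Proof.
move=> nda; have [-> //|nba] := eqVneq b a; have nab : a != b by rewrite eq_sym.
have com : (E a b + E a a) *m (E b d - E a d) = (E b d - E a d) *m (E a b + E a a).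
  rewrite mulmxDl !mulmxBr mulmxBl !mulmxDr !mul_delta_mx_cond !eqxx.
  rewrite (negbTE nba) (negbTE nab) (negbTE nda) !mulr0n !mulr1n.
  by rewrite subr0 add0r subrr !addr0 subrr.
move/w2l_trace_commuting: com; rewrite w2l_traceDl !mulmxBr !raddfB /=.
rewrite (w2l_trace_delta0 nba nda) (w2l_trace_delta0 nab nda) sub0r subr0.
by move/eqP; rewrite addr_eq0 opprK => /eqP.
Qed.

Lemma w2l_trace_delta_cycle a b c : a != b -> b != c -> c != a ->
  B (E a b) (E b a) + B (E b c) (E c b) + B (E c a) (E a c) = 0.
Proof.
move=> nab nbc nca; have nba : b != a by rewrite eq_sym.
have ncb : c != b by rewrite eq_sym.
have nac : a != c by rewrite eq_sym.
pose P := E a b + E b c + E c a.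
have P2 : P *m P = E a c + E b a + E c b.
  rewrite /P !mulmxDl !mulmxDr !mul_delta_mx_cond !eqxx (negbTE nab) (negbTE nbc)
    (negbTE nca) (negbTE nba) (negbTE ncb) (negbTE nac) !mulr0n !mulr1n.
  by rewrite !addr0 !add0r.
have := @w2l_trace_commuting P (P *m P) (mulmxA _ _ _).
rewrite P2 /P !w2l_traceDl !w2l_traceDr.
rewrite (@w2l_trace_delta0 a b a c nba nca) (@w2l_trace_delta0 a b c b nbc nba).
rewrite (@w2l_trace_delta0 b c a c nca ncb) (@w2l_trace_delta0 b c b a ncb nab).
rewrite (@w2l_trace_delta0 c a b a nab nac) (@w2l_trace_delta0 c a c b nac nbc).
by rewrite !addr0 !add0r.
Qed.

(* Off the diagonal the entries are read off from the chain relation; on the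
   diagonal they are fixed by the cycle relation up to a scalar, normalised
   by w2l_mx o o = 0. *)
Definition w2l_mx : M :=
  \matrix_(d, a) (if d == a then B (E a o) (E o a) else B (E a a) (E a d)).

Lemma w2l_mx_diag_diff a b :
  w2l_mx a a - w2l_mx b b = B (E a b) (E b a).
Proof.
rewrite !mxE !eqxx.
have [<-|nab] := eqVneq a b; first by rewrite subrr w2l_trace_commuting.
have [-> {a nab}|nao] := eqVneq a o.
  by rewrite w2l_trace_commuting // sub0r -w2l_trace_antisym.
have [-> {b nab}|nbo] := eqVneq b o; first by rewrite [X in _ - X]w2l_trace_commuting ?subr0.
have noa : o != a by rewrite eq_sym.
move/eqP: (w2l_trace_delta_cycle nab nbo noa).
rewrite (w2l_trace_antisym (E o a)) addrAC addr_eq0 subr_eq => /eqP ->.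
by rewrite addrC.
Qed.

Lemma w2l_trace_delta a b p q :
  B (E a b) (E q p) = w2l_mx p a *+ (b == q) - w2l_mx b q *+ (p == a).
Proof.
have [<-|nbq] := eqVneq b q; have [->|npa] := eqVneq p a.
- by rewrite !mulr1n w2l_mx_diag_diff.
- by rewrite mulr1n subr0 w2l_trace_delta_chain // mxE (negbTE npa).
- rewrite mulr1n sub0r w2l_trace_antisym w2l_trace_delta_chain //.
  by rewrite mxE (negbTE nbq).
- by rewrite subr0 w2l_trace_delta0 // eq_sym.
Qed.

Lemma w2l_inner x : Delta x = w2l_mx *m x - x *m w2l_mx.
Proof.
apply: (mx_linear_eq_on_delta w2l_linear (mx_linear_ad _)) => a b.
apply/matrixP => p q; rewrite -!(mxtrace_mul_delta _ p q) w2l_trace_delta.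
by rewrite mulmxBl raddfB /= mxtrace_mul_delta_delta mxtrace_delta_mul_delta.
Qed.

Lemma w2l_derivation : is_derivation Delta.
Proof.
split=> [|x y]; first exact: w2l_linear.
by rewrite !w2l_inner mulmxBl mulmxBr !mulmxA addrA subrK.
Qed.

End WeakTwoLocal.

Theorem proposition2p11 (R : realType) (n : nat)
    (Delta : 'M[R[i]]_n -> 'M[R[i]]_n) :
  weak_2_local_derivation Delta -> symmetric_map Delta ->
  mx_linear Delta /\ is_derivation Delta.
Proof.
move=> w2l _; case: n Delta w2l => [|m] Delta w2l.
  have flat (x y : 'M[R[i]]_0) : x = y by rewrite (flatmx0 x) (flatmx0 y).
  by split; [|split]; move=> *; apply: flat.
have derD := w2l_derivation ord0 w2l.
by split; first case: derD.
Qed.
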